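(* Fix integers $2\le k\le n'\le n$. The $n'$-grouped $(k,n)$ random-grid visual cryptography scheme described in the context is valid, i.e.: (i) for every set of $k$ of the $n$ shadow images, the recovered image obtained by stacking them has contrast $\alpha>0$; and (ii) for every $q<k$ and every set of $q$ shadow images, the recovered image obtained by stacking them has contrast $\alpha=0$.
   Context: Let $M=\lceil n/n'\rceil$, $r=n-(M-1)n'$. Each secret pixel $s\in\{0,1\}$ is shared independently as follows. Basic bits: $b_1,\ldots,b_{k-1}$ are independent uniform bits and $b_k=s\oplus b_1\oplus\cdots\oplus b_{k-1}$. There is a fixed sequence $c=(c_1,\ldots,c_{n'})\in\{1,\ldots,k\}^{n'}$ in which every value $1,\ldots,k$ occurs (the index pattern of the base $(k,n')$ scheme). The $n$ share bits form $M$ groups: groups $1,\ldots,M-1$ have $n'$ positions and group $M$ has $r$ positions. For each group $j$ an independent uniformly random permutation $\sigma_j$ of $\{1,\ldots,n'\}$ is drawn (independent of the $b_i$), and position $\delta$ of group $j$ receives the bit $b_{c_{\sigma_j(\delta)}}$ ($\delta\le r$ for group $M$); this bit is the pixel of shadow image number $(j-1)n'+\delta$. Stacking shadow images computes the OR of their bits at each pixel (0 = transparent, 1 = opaque). For a stacked set of shadow images, let $t_s$ be the probability that a recovered pixel equals $0$ given the secret pixel is $s$; the contrast is $\alpha=(t_0-t_1)/(1+t_1)$. *)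

From mathcomp Require Import all_boot all_order all_algebra all_fingroup.
Set Implicit Arguments. Unset Strict Implicit. Unset Printing Implicit Defensive.
Import GRing.Theory Num.Theory.
Local Open Scope ring_scope.

(* Conventions: everything is 0-based.  Basic bits are indexed by 'I_k
   (b_1..b_k of the paper = indices 0..k-1), positions of the base scheme by
   'I_n', shadow images by 'I_n.  Shadow image i (0-based) is position
   d = i %% n' of group j = i %/ n' (paper: image (j-1)n'+d, 1-based). *)

Definition ngroups (n n' : nat) : nat := ((n + n'.-1) %/ n')%N.

(* The random experiment: uniform free bits b_1..b_{k-1} and independent
   uniform permutations sigma_1..sigma_M. *)
Definition Omega (k n n' : nat) : finType :=
  ({ffun 'I_k.-1 -> bool} * {ffun 'I_(ngroups n n') -> {perm 'I_n'}})%type.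

Definition basic_bit (k : nat) (s : bool) (b : {ffun 'I_k.-1 -> bool})
  (i : 'I_k) : bool :=
  match insub (val i) : option 'I_k.-1 with
  | Some i' => b i'
  | None => addb s (\big[addb/false]_(j : 'I_k.-1) b j)
  end.

Definition share (k n n' : nat) (c : 'I_n' -> 'I_k) (s : bool)
  (w : Omega k n n') (i : 'I_n) : bool :=
  match insub (i %/ n')%N : option 'I_(ngroups n n') with
  | Some j =>
      match insub (i %% n')%N : option 'I_n' with
      | Some d => basic_bit s w.1 (c (w.2 j d))
      | None => false
      end
  | None => false
  end.

Definition stack (k n n' : nat) (c : 'I_n' -> 'I_k) (s : bool)
  (Q : {set 'I_n}) (w : Omega k n n') : bool :=
  [exists i in Q, share c s w i].

(* t_s = Pr[recovered pixel = 0 | secret = s], uniform probability on Omega *)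
Definition t_prob (k n n' : nat) (c : 'I_n' -> 'I_k) (s : bool)
  (Q : {set 'I_n}) : rat :=
  (#|[set w : Omega k n n' | ~~ stack c s Q w]|%:R / #|Omega k n n'|%:R).

Definition contrast (k n n' : nat) (c : 'I_n' -> 'I_k) (Q : {set 'I_n}) : rat :=
  (t_prob c false Q - t_prob c true Q) / (1 + t_prob c true Q).

From mathcomp Require Import all_boot all_order all_algebra all_fingroup zify.
Import GRing.Theory Num.Theory.
Set Implicit Arguments. Unset Strict Implicit. Unset Printing Implicit Defensive.
Local Open Scope ring_scope.

(* The XOR of the k basic bits is the secret, while any k-1 of them are uniform
   and independent of it.  Hence, for a fixed choice of the permutations, if the
   stacked shadows miss some basic bit x0, toggling the secret together with
   the free bit x0 (or alone, when x0 is the last bit) leaves every stacked bit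
   unchanged: this measure-preserving involution equates t_0 and t_1.  If the
   stacked shadows see all k bits, the stack is opaque for s = 1 (some bit is 1)
   but transparent for s = 0 when all free bits vanish, so t_1 < t_0; when
   |Q| = k the permutations can be chosen so that all k bits are seen. *)

Lemma perm_extend (A T : finType) (h f : A -> T) (s : seq A) :
  {in s &, forall a b, (h a == h b) = (f a == f b)} ->
  exists sg : {perm T}, {in s, forall a, sg (h a) = f a}.
Proof.
elim: s => [|x s IHs] hf; first by exists 1%g.
have [sg sgE] : exists sg : {perm T}, {in s, forall a, sg (h a) = f a}.
  by apply: IHs => a b sa sb; apply: hf; rewrite inE ?sa ?sb orbT.
exists (sg * tperm (sg (h x)) (f x))%g => a; rewrite inE permM.
have [hax ax|hax ax] := eqVneq (h a) (h x).
  by rewrite hax tpermL; apply/esym/eqP; rewrite -hf ?mem_head // hax.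
have sa : a \in s by case/predU1P: ax hax => // ->; rewrite eqxx.
have fxa : f x != f a by rewrite -hf ?mem_head ?inE ?sa ?orbT // eq_sym.
rewrite (sgE a) // tpermD //.
by rewrite -(sgE a) // (inj_eq perm_inj) eq_sym.
Qed.

Section BasicBits.

Variable k : nat.
Implicit Types (s : bool) (b : {ffun 'I_k.-1 -> bool}).

Definition flip_free (x0 : 'I_k) b : {ffun 'I_k.-1 -> bool} :=
  [ffun j => b j (+) (val j == val x0)].

Lemma flip_freeK x0 : involutive (flip_free x0).
Proof. by move=> b; apply/ffunP=> j; rewrite !ffunE addbK. Qed.

Lemma basic_bit_flip s b (x0 x : 'I_k) :
  x != x0 -> basic_bit (~~ s) (flip_free x0 b) x = basic_bit s b x.
Proof.
move=> /negbTE xx0; rewrite /basic_bit; case: insubP => [x' _ ex|].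
  by rewrite ffunE ex val_eqE xx0 addbF.
rewrite -leqNgt => x_last.
have x0_free : (val x0 < k.-1)%N.
  by move: (ltn_ord x) (ltn_ord x0) xx0 x_last => /=; rewrite -val_eqE /=; lia.
rewrite (eq_bigr (fun j => b j (+) (j == Ordinal x0_free))) => [|j _]; last by rewrite ffunE.
have hit_once : \big[addb/false]_(j < k.-1) (j == Ordinal x0_free) = true.
  by rewrite (bigD1 (Ordinal x0_free)) //= eqxx big1 // => j /negbTE.
by rewrite big_split /= hit_once addbT addNb addbN negbK.
Qed.

Lemma sum_basic_bit s b :
  (0 < k)%N -> \big[addb/false]_(x < k) basic_bit s b x = s.
Proof.
case: k b => // k' b _; rewrite big_ord_recr /=.
rewrite (eq_bigr b) => [|j _]; last by rewrite /basic_bit /= valK.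
by rewrite /basic_bit insubN ?ltnn //= addbCA addbb addbF.
Qed.

Lemma basic_bit0 (x : 'I_k) : basic_bit false [ffun=> false] x = false.
Proof.
by rewrite /basic_bit; case: insub => [j|]; rewrite ?ffunE // big1 // => j; rewrite ffunE.
Qed.

End BasicBits.

Section Stacking.

Variables (k n' n : nat) (c : 'I_n' -> 'I_k).
Hypothesis n'_gt0 : (0 < n')%N.

Lemma group_of_subproof (i : 'I_n) : (i %/ n' < ngroups n n')%N.
Proof.
rewrite /ngroups ltn_divLR //.
by move: (ltn_ord i) (divn_eq (n + n'.-1) n') (ltn_pmod (n + n'.-1) n'_gt0); lia.
Qed.

Definition group_of (i : 'I_n) : 'I_(ngroups n n') := Ordinal (group_of_subproof i).
Definition slot_of (i : 'I_n) : 'I_n' := Ordinal (ltn_pmod i n'_gt0).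

Lemma group_slot_inj (i j : 'I_n) :
  group_of i = group_of j -> slot_of i = slot_of j -> i = j.
Proof.
move=> /(congr1 val) /= eq_div /(congr1 val) /= eq_mod.
by apply: val_inj; rewrite /= (divn_eq i n') (divn_eq j n') eq_div eq_mod.
Qed.

Lemma shareE s (w : Omega k n n') (i : 'I_n) :
  share c s w i = basic_bit s w.1 (c (w.2 (group_of i) (slot_of i))).
Proof.
rewrite /share; case: insubP => [j _ ej|]; last by rewrite group_of_subproof.
case: insubP => [d _ ed|]; last by rewrite ltn_pmod.
by congr (basic_bit _ _ (c (w.2 _ _))); apply: val_inj.
Qed.

Variable Q : {set 'I_n}.

Definition used_bits (p : {ffun 'I_(ngroups n n') -> {perm 'I_n'}}) : {set 'I_k} :=
  [set c (p (group_of i) (slot_of i)) | i in Q].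

Definition swap_secret (w : Omega k n n') : Omega k n n' :=
  (if [pick x in ~: used_bits w.2] is Some x0 then flip_free x0 w.1 else w.1, w.2).

Lemma swap_secretK : involutive swap_secret.
Proof.
move=> [b p]; rewrite /swap_secret /=.
by case: pickP => [x0 _|_] //=; rewrite flip_freeK.
Qed.

Lemma stack_swap_secret s (w : Omega k n n') :
  used_bits w.2 != setT -> stack c (~~ s) Q (swap_secret w) = stack c s Q w.
Proof.
move=> not_all; rewrite /swap_secret; case: pickP => [x0|none]; last first.
  by case/eqP: not_all; apply/setP => x; move: (none x); rewrite !inE => /negbFE.
rewrite inE => x0_unused; apply: eq_existsb => i; rewrite !shareE /=.
case: (boolP (i \in Q)) => //= iQ; rewrite basic_bit_flip //.
by apply: contraNneq x0_unused => <-; apply: imset_f.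
Qed.

Lemma stack_used_all (w : Omega k n n') :
  (0 < k)%N -> used_bits w.2 = setT -> stack c true Q w.
Proof.
move=> k_gt0 all_used; apply: contraT => clear.
have bits0 x : basic_bit true w.1 x = false.
  have /imsetP [i iQ ->] : x \in used_bits w.2 by rewrite all_used inE.
  by apply: contraNF clear => bit1; apply/existsP; exists i; rewrite iQ shareE.
by have := sum_basic_bit true w.1 k_gt0; rewrite big1.
Qed.

Lemma stack0 (p : {ffun 'I_(ngroups n n') -> {perm 'I_n'}}) :
  stack c false Q (([ffun=> false], p) : Omega k n n') = false.
Proof. by apply/existsP => -[i /andP [_]]; rewrite shareE basic_bit0. Qed.

Definition transparent s := [set w : Omega k n n' | ~~ stack c s Q w].

Lemma swap_secret_transparent s (w : Omega k n n') :
  used_bits w.2 != setT -> w \in transparent s ->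
  swap_secret w \in transparent (~~ s).
Proof. by move=> not_all; rewrite !inE stack_swap_secret. Qed.

Lemma card_transparent_eq :
  (forall p, used_bits p != setT) -> #|transparent false| = #|transparent true|.
Proof.
move=> never_all.
have le_swap s : (#|transparent s| <= #|transparent (~~ s)|)%N.
  rewrite -(card_imset _ (inv_inj swap_secretK)); apply/subset_leq_card/subsetP.
  by move=> _ /imsetP [w ws ->]; apply: swap_secret_transparent (never_all _) ws.
by apply/anti_leq; rewrite (le_swap false) (le_swap true).
Qed.

Lemma card_transparent_lt (p0 : {ffun 'I_(ngroups n n') -> {perm 'I_n'}}) :
  (0 < k)%N -> used_bits p0 = setT ->
  (#|transparent true| < #|transparent false|)%N.
Proof.
move=> k_gt0 p0_all.
have opaque_all w : used_bits w.2 = setT -> w \notin transparent true.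
  by move=> all_used; rewrite inE negbK stack_used_all.
rewrite -(card_imset _ (inv_inj swap_secretK)); apply: proper_card; apply/properP.
split.
  apply/subsetP => _ /imsetP [w wt ->].
  have [all_used|not_all] := eqVneq (used_bits w.2) setT.
    by move: wt; rewrite (negbTE (opaque_all w all_used)).
  exact: (swap_secret_transparent not_all wt).
exists (([ffun=> false], p0) : Omega k n n'); first by rewrite inE stack0.
apply/imsetP => -[w wt /(congr1 snd) /= p0E].
by move: wt; rewrite (negbTE (opaque_all w _)) // -p0E.
Qed.

Lemma used_bits_full :
  #|Q| = k -> (forall x, exists y, c y = x) -> exists p, used_bits p = setT.
Proof.
move=> card_Q c_onto; have [g gK] := fin_all_exists c_onto.
pose e x : 'I_n := enum_val (cast_ord (esym card_Q) x).
have e_inj : injective e by move=> x y /enum_val_inj /cast_ord_inj.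
have slot_perm j : exists sg : {perm 'I_n'},
    {in [seq x <- enum 'I_k | group_of (e x) == j], forall x, sg (slot_of (e x)) = g x}.
  apply: perm_extend => x y; rewrite !mem_filter => /andP [/eqP gx _] /andP [/eqP gy _].
  rewrite (inj_eq (can_inj gK)); apply/eqP/eqP => [|-> //].
  by move/(group_slot_inj (etrans gx (esym gy)))/e_inj.
have [pf pfE] := fin_all_exists slot_perm.
exists (finfun pf); apply/setP => x; rewrite inE; apply/imsetP.
exists (e x); first exact: enum_valP.
by rewrite ffunE pfE ?gK // mem_filter eqxx mem_enum.
Qed.

Lemma used_bits_proper p : (#|Q| < k)%N -> used_bits p != setT.
Proof.
move=> small; apply: contraTneq small => all_used; rewrite -leqNgt.
by rewrite -[k]card_ord -cardsT -all_used leq_imset_card.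
Qed.

Lemma t_probE s : t_prob c s Q = #|transparent s|%:R / #|Omega k n n'|%:R.
Proof. by []. Qed.

Lemma contrast_gt0 :
  (#|transparent true| < #|transparent false|)%N -> 0 < contrast c Q.
Proof.
move=> lt_card; rewrite /contrast !t_probE.
have N_gt0 : (0 < #|Omega k n n'|)%N.
  exact: leq_trans (leq_ltn_trans (leq0n _) lt_card) (max_card _).
apply: divr_gt0; first by rewrite subr_gt0 ltr_pM2r ?invr_gt0 ?ltr0n // ltr_nat.
by rewrite ltr_wpDr ?divr_ge0.
Qed.

Lemma contrast_eq0 : #|transparent false| = #|transparent true| -> contrast c Q = 0.
Proof. by move=> eq_card; rewrite /contrast !t_probE eq_card subrr mul0r. Qed.

End Stacking.

Theorem theorem2 (k n' n : nat) (c : 'I_n' -> 'I_k) :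
  (2 <= k)%N -> (k <= n')%N -> (n' <= n)%N ->
  (forall x : 'I_k, exists y : 'I_n', c y = x) ->
  (forall Q : {set 'I_n}, #|Q| = k -> 0 < contrast c Q) /\
  (forall Q : {set 'I_n}, (#|Q| < k)%N -> contrast c Q = 0).
Proof.
move=> k_ge2 k_le_n' _ c_onto.
have k_gt0 : (0 < k)%N by apply: leq_trans k_ge2.
have n'_gt0 : (0 < n')%N by apply: leq_trans k_le_n'.
split=> Q card_Q.
  have [p0 p0_all] := used_bits_full n'_gt0 card_Q c_onto.
  exact/contrast_gt0/(card_transparent_lt k_gt0 p0_all).
by apply/contrast_eq0/card_transparent_eq => p; apply: used_bits_proper.
Qed.
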